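(* Let $x \in (0,1)$ have regular continued fraction expansion $x = [x_1,x_2,x_3,\ldots]$. Then for each $j \ge 1$, \[ R^{x_2+x_4+\cdots+x_{2j}}(x) = [x_{2j+1}+1, x_{2j+2}, x_{2j+3},\ldots], \] and if $0 < \ell < x_{2j}$, then \[ R^{x_2+x_4+\cdots+x_{2j-2}+\ell}(x) = [1, x_{2j}-\ell, x_{2j+1}, x_{2j+2},\ldots]. \]
   Context: $[a_1,a_2,a_3,\ldots]$ denotes the regular continued fraction $\cfrac{1}{a_1+\cfrac{1}{a_2+\cdots}}$ with positive integer digits. The Gauss map $G:[0,1]\to[0,1]$ is $G(0)=0$, $G(x)=\frac1x-\lfloor\frac1x\rfloor$ for $x\neq0$, and $R:[0,1]\to[0,1]$ is defined by $R(x) = 1-G(x)$. *)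

From Stdlib Require Import Reals Lra Lia.
Open Scope R_scope.

Fixpoint fcf (n : nat) (a : nat -> nat) : R :=
  match n with
  | O => 0
  | S m => 1 / (INR (a O) + fcf m (fun k => a (S k)))
  end.

Definition is_cf (a : nat -> nat) (x : R) : Prop :=
  (forall k, (1 <= a k)%nat) /\ Un_cv (fun n => fcf n a) x.

Definition gauss (x : R) : R :=
  if Req_EM_T x 0 then 0 else 1 / x - IZR (Int_part (1 / x)).

Definition Rmap (x : R) : R := 1 - gauss x.

(* Sum of digits x_2 + x_4 + ... + x_{2j}; with a k = x_{k+1} this is
   a 1 + a 3 + ... + a (2j-1). *)
Fixpoint even_digit_sum (a : nat -> nat) (j : nat) : nat :=
  match j with
  | O => O
  | S i => (even_digit_sum a i + a (2 * i + 1))%nat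
  end.

(* For [y = [c, y_2, y_3, ...] = 1/(c + z)] the identity
   [1 - 1/(c + z) = 1/(1 + 1/(c - 1 + z))] gives [1 - y = [1, c - 1, y_2, ...]]
   when [c >= 2], while for [c = 1] the identity [1 - 1/(1 + z) = 1/(1 + 1/z)]
   gives [1 - y = [y_2 + 1, y_3, ...]].  As [G] drops the first digit,
   [R = 1 - G] lowers the second digit by one until it reaches [1], and the
   next application merges the third digit into the first.  Hence [x_2]
   applications of [R] turn [[x_1, x_2, x_3, ...]] into [[x_3 + 1, x_4, ...]],
   and the theorem follows by induction on [j]. *)
From Coquelicot Require Import Coquelicot.
From Stdlib Require Import Reals Lra Lia.
Open Scope R_scope.

Definition cf_cons (d : nat) (s : nat -> nat) : nat -> nat :=
  fun k => match k with O => d | S m => s m end.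

Definition cf_drop (n : nat) (a : nat -> nat) : nat -> nat := fun m => a (n + m)%nat.

Lemma fcf_ext n : forall a b, (forall k, a k = b k) -> fcf n a = fcf n b.
Proof.
  induction n as [|n IH]; intros a b H; simpl; auto.
  rewrite H, (IH _ (fun k => b (S k))); auto.
Qed.

Lemma is_cf_ext a b x : is_cf a x -> (forall k, a k = b k) -> is_cf b x.
Proof.
  intros [Ha Hcv] Hab; split.
  - intro k; rewrite <- Hab; auto.
  - intros e he; destruct (Hcv e he) as [N HN]; exists N; intros n hn.
    rewrite <- (fcf_ext n a b Hab); auto.
Qed.

Lemma INR_digit_ge1 (a : nat -> nat) i : (forall k, (1 <= a k)%nat) -> 1 <= INR (a i).
Proof. intros H; apply (le_INR 1); auto. Qed.

Lemma fcf_bounds n : forall a, (forall k, (1 <= a k)%nat) -> 0 <= fcf n a <= 1.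
Proof.
  induction n as [|n IH]; intros a H; simpl; [lra|].
  assert (Htail := IH (fun k => a (S k)) (fun k => H (S k))).
  assert (Ha0 := INR_digit_ge1 a 0 H).
  unfold Rdiv; rewrite Rmult_1_l; split.
  - left; apply Rinv_0_lt_compat; lra.
  - rewrite <- Rinv_1; apply Rinv_le_contravar; lra.
Qed.

Lemma fcf_succ_ge n a : (forall k, (1 <= a k)%nat) ->
  1 / (INR (a O) + 1) <= fcf (S n) a.
Proof.
  intros H; simpl.
  assert (Htail := fcf_bounds n (fun k => a (S k)) (fun k => H (S k))).
  assert (Ha0 := INR_digit_ge1 a 0 H).
  unfold Rdiv; rewrite !Rmult_1_l.
  apply Rinv_le_contravar; lra.
Qed.

Lemma cf_pos a x : is_cf a x -> 0 < x.
Proof.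
  intros [Ha Hcv].
  apply is_lim_seq_Reals, is_lim_seq_incr_1 in Hcv.
  assert (Hge := is_lim_seq_le (fun _ => 1 / (INR (a O) + 1)) _ _ _
     (fun n => fcf_succ_ge n a Ha) (is_lim_seq_const _) Hcv).
  assert (Ha0 := INR_digit_ge1 a 0 Ha).
  assert (0 < 1 / (INR (a O) + 1)) by (apply Rdiv_lt_0_compat; lra).
  simpl in Hge; lra.
Qed.

Lemma cf_tail a x : is_cf a x -> is_cf (cf_drop 1 a) (1 / x - INR (a O)).
Proof.
  intros Hx; assert (hx := cf_pos a x Hx).
  destruct Hx as [Ha Hcv]; split; [intro; apply Ha|].
  apply is_lim_seq_Reals, is_lim_seq_incr_1 in Hcv; apply is_lim_seq_Reals.
  assert (Hinv := is_lim_seq_div' (fun _ => 1) _ 1 x (is_lim_seq_const 1) Hcv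
                 ltac:(lra)).
  assert (Hsub := is_lim_seq_minus' _ _ _ _ Hinv (is_lim_seq_const (INR (a O)))).
  eapply is_lim_seq_ext; [|exact Hsub].
  intro n; simpl; change (cf_drop 1 a) with (fun k => a (S k)).
  assert (Htail := fcf_bounds n (fun k => a (S k)) (fun k => Ha (S k))).
  assert (Ha0 := INR_digit_ge1 a 0 Ha).
  field; lra.
Qed.

Lemma cf_range a x : is_cf a x -> 0 < x < 1.
Proof.
  intros Hx; assert (hx := cf_pos a x Hx).
  assert (hz := cf_pos _ _ (cf_tail a x Hx)).
  assert (Ha0 := INR_digit_ge1 a 0 (proj1 Hx)).
  split; auto.
  assert (Hinv : 1 < / x) by (unfold Rdiv in hz; lra).
  rewrite <- (Rinv_inv x), <- Rinv_1; apply Rinv_lt_contravar; lra.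
Qed.

Lemma is_cf_cons d s y : (1 <= d)%nat -> is_cf s y ->
  is_cf (cf_cons d s) (1 / (INR d + y)).
Proof.
  intros hd Hy; assert (hy := cf_range s y Hy).
  assert (Hd : 1 <= INR d) by (apply (le_INR 1); auto).
  destruct Hy as [Hs Hcv]; split.
  - intros [|k]; simpl; auto.
  - apply is_lim_seq_Reals in Hcv; apply is_lim_seq_Reals, is_lim_seq_incr_1.
    assert (Hadd := is_lim_seq_plus' _ _ _ _ (is_lim_seq_const (INR d)) Hcv).
    assert (Hinv := is_lim_seq_div' (fun _ => 1) _ 1 _ (is_lim_seq_const 1) Hadd
                 ltac:(lra)).
    eapply is_lim_seq_ext; [|exact Hinv].
    intro n; reflexivity.
Qed.

Lemma gauss_cf a x : is_cf a x -> is_cf (cf_drop 1 a) (gauss x).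
Proof.
  intros Hx; assert (hx := cf_range a x Hx).
  assert (Hz := cf_tail a x Hx).
  assert (hz := cf_range _ _ Hz).
  unfold gauss; destruct (Req_EM_T x 0) as [e|_]; [lra|].
  assert (Hfloor : Int_part (1 / x) = Z.of_nat (a O)).
  { unfold Int_part.
    assert (Hup : (Z.of_nat (a O) + 1)%Z = up (1 / x)).
    { apply tech_up; rewrite plus_IZR, <- INR_IZR_INZ; lra. }
    rewrite <- Hup; lia. }
  rewrite Hfloor, <- INR_IZR_INZ; auto.
Qed.

Lemma cf_one_minus_split s y : is_cf s y -> (2 <= s O)%nat ->
  is_cf (cf_cons 1 (cf_cons (s O - 1) (cf_drop 1 s))) (1 - y).
Proof.
  intros Hy hs.
  assert (hy := cf_range _ _ Hy).
  assert (Hz := cf_tail _ _ Hy).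
  set (z := 1 / y - INR (s O)) in *.
  assert (hz := cf_range _ _ Hz).
  assert (Hs0 : 2 <= INR (s O)) by (apply (le_INR 2); auto).
  replace (1 - y) with (1 / (INR 1 + 1 / (INR (s O - 1) + z))).
  { apply is_cf_cons; [lia|]. apply is_cf_cons; [lia|exact Hz]. }
  rewrite minus_INR by lia.
  assert (Hyz : y = 1 / (INR (s O) + z)) by (unfold z; field; lra).
  rewrite Hyz; simpl; field; repeat split; lra.
Qed.

Lemma cf_one_minus_merge s y : is_cf s y -> s O = 1%nat ->
  is_cf (cf_cons (s 1%nat + 1) (cf_drop 2 s)) (1 - y).
Proof.
  intros Hy hs.
  assert (hy := cf_range _ _ Hy).
  assert (Hz := cf_tail _ _ Hy).
  set (z := 1 / y - INR (s O)) in *.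
  assert (hz := cf_range _ _ Hz).
  assert (Hw := cf_tail _ _ Hz).
  change (cf_drop 1 s O) with (s 1%nat) in Hw.
  set (w := 1 / z - INR (s 1%nat)) in *.
  assert (hw := cf_range _ _ Hw).
  assert (Hs1 := INR_digit_ge1 s 1 (proj1 Hy)).
  replace (1 - y) with (1 / (INR (s 1%nat + 1) + w)).
  { apply is_cf_cons; [lia|exact Hw]. }
  assert (Hyz : y = 1 / (1 + z)) by (unfold z; rewrite hs; simpl; field; lra).
  assert (Hzw : z = 1 / (INR (s 1%nat) + w)) by (unfold w; field; lra).
  rewrite Hyz, Hzw, plus_INR; simpl; field; lra.
Qed.

Lemma Rmap_cf_split d s v : is_cf (cf_cons d s) v -> (2 <= s O)%nat ->
  is_cf (cf_cons 1 (cf_cons (s O - 1) (cf_drop 1 s))) (Rmap v).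
Proof. intros Hv; exact (cf_one_minus_split s _ (gauss_cf _ _ Hv)). Qed.

Lemma Rmap_cf_merge d s v : is_cf (cf_cons d s) v -> s O = 1%nat ->
  is_cf (cf_cons (s 1%nat + 1) (cf_drop 2 s)) (Rmap v).
Proof. intros Hv; exact (cf_one_minus_merge s _ (gauss_cf _ _ Hv)). Qed.

Lemma iter_Rmap_partial d s v : is_cf (cf_cons d s) v ->
  forall l, (0 < l)%nat -> (l < s O)%nat ->
  is_cf (cf_cons 1 (cf_cons (s O - l) (cf_drop 1 s))) (Nat.iter l Rmap v).
Proof.
  intros Hv l; induction l as [|l IH]; intros hl0 hl; [lia|].
  destruct (Nat.eq_dec l 0) as [->|hl1]; [exact (Rmap_cf_split d s v Hv ltac:(lia))|].
  replace (s O - S l)%nat with (s O - l - 1)%nat by lia.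
  exact (Rmap_cf_split _ _ _ (IH ltac:(lia) ltac:(lia)) ltac:(simpl; lia)).
Qed.

Lemma iter_Rmap_block d s v : is_cf (cf_cons d s) v ->
  is_cf (cf_cons (s 1%nat + 1) (cf_drop 2 s)) (Nat.iter (s O) Rmap v).
Proof.
  intros Hv.
  assert (hs := proj1 Hv 1%nat); simpl in hs.
  replace (s O) with (S (s O - 1)) by lia; simpl.
  destruct (Nat.eq_dec (s O - 1) 0) as [hs1|hs1].
  { rewrite hs1; exact (Rmap_cf_merge d s v Hv ltac:(lia)). }
  assert (Hl := iter_Rmap_partial d s v Hv (s O - 1) ltac:(lia) ltac:(lia)).
  exact (Rmap_cf_merge _ _ _ Hl ltac:(simpl; lia)).
Qed.

Lemma iter_Rmap_block_at d a n v : is_cf (cf_cons d (cf_drop n a)) v ->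
  is_cf (cf_cons (a (n + 1)%nat + 1) (cf_drop (n + 2) a)) (Nat.iter (a n) Rmap v).
Proof.
  intros Hv.
  replace (a n) with (cf_drop n a O) by (unfold cf_drop; f_equal; lia).
  eapply is_cf_ext; [exact (iter_Rmap_block _ _ _ Hv)|].
  intros [|k]; unfold cf_cons, cf_drop; [reflexivity | f_equal; lia].
Qed.

Lemma iter_even_digit_sum_succ a i v :
  Nat.iter (even_digit_sum a (S i)) Rmap v
  = Nat.iter (a (2 * i + 1)%nat) Rmap (Nat.iter (even_digit_sum a i) Rmap v).
Proof. simpl; rewrite Nat.add_comm; apply Nat.iter_add. Qed.

Lemma iter_even_digit_sum_cf a x : is_cf a x -> forall i, exists d,
  is_cf (cf_cons d (cf_drop (2 * i + 1) a)) (Nat.iter (even_digit_sum a i) Rmap x).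
Proof.
  intros Hx i; induction i as [|i [d IH]].
  - exists (a O); eapply is_cf_ext; [exact Hx|]; intros [|k]; reflexivity.
  - exists (a (2 * i + 1 + 1)%nat + 1)%nat.
    rewrite iter_even_digit_sum_succ.
    eapply is_cf_ext; [exact (iter_Rmap_block_at _ _ _ _ IH)|].
    intros [|k]; unfold cf_cons, cf_drop; [reflexivity | f_equal; lia].
Qed.

Theorem lemma3p2 (x : R) (a : nat -> nat) :
  0 < x < 1 -> is_cf a x ->
  forall j : nat, (1 <= j)%nat ->
    is_cf (fun k => match k with
                    | O => (a (2 * j)%nat + 1)%nat
                    | S m => a (2 * j + 1 + m)%nat
                    end)
          (Nat.iter (even_digit_sum a j) Rmap x)
    /\
    (forall l : nat, (0 < l)%nat -> (l < a (2 * j - 1)%nat)%nat ->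
      is_cf (fun k => match k with
                      | O => 1%nat
                      | S O => (a (2 * j - 1)%nat - l)%nat
                      | S (S m) => a (2 * j + m)%nat
                      end)
            (Nat.iter (even_digit_sum a (j - 1) + l) Rmap x)).
Proof.
  (* [0 < x < 1] is implied by [is_cf a x], see [cf_range]. *)
  intros _ Hx j hj.
  destruct j as [|i]; [lia|].
  destruct (iter_even_digit_sum_cf a x Hx i) as [d Hd].
  assert (Hdigit : a (2 * S i - 1)%nat = cf_drop (2 * i + 1) a O)
    by (unfold cf_drop; f_equal; lia).
  split.
  - rewrite iter_even_digit_sum_succ.
    eapply is_cf_ext; [exact (iter_Rmap_block_at _ _ _ _ Hd)|].
    intros [|k]; unfold cf_cons, cf_drop; [do 2 f_equal | f_equal]; lia.
  - intros l hl0 hl.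
    rewrite Hdigit in hl |- *.
    replace (S i - 1)%nat with i by lia.
    rewrite (Nat.add_comm (even_digit_sum a i) l), Nat.iter_add.
    eapply is_cf_ext; [exact (iter_Rmap_partial _ _ _ Hd l hl0 hl)|].
    intros [|[|k]]; unfold cf_cons, cf_drop; try reflexivity; f_equal; lia.
Qed.
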